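(* For each $k\in\mathbb{Z}$, the set of standard monomials $\{z_k[a_1,a_2]\}_{a_1,a_2\in\mathbb{Z}}$, where $z_k[a_1,a_2]=x_{k-1}^{[a_2]_+}x_k^{[-a_1]_+}x_{k+1}^{[-a_2]_+}x_{k+2}^{[a_1]_+}$, is a $\underline\Bbbk$-basis of $\mathcal{A}(P_1,P_2)$.
   Context: $[a]_+=\max(a,0)$. $\Bbbk$ is a field of characteristic zero and $P_1,P_2\in\Bbbk[z]$ are monic palindromic polynomials (palindromic: $P(z)=z^dP(z^{-1})$ for $d=\deg P$). With $x_1,x_2$ commuting indeterminates, define $x_k\in\Bbbk(x_1,x_2)$ for all $k\in\mathbb{Z}$ by $x_{k+1}x_{k-1}=P_1(x_k)$ if $k$ is even and $x_{k+1}x_{k-1}=P_2(x_k)$ if $k$ is odd. $\underline\Bbbk$ is the $\mathbb{Z}$-subalgebra of $\Bbbk$ generated by the coefficients of $P_1,P_2$, and $\mathcal{A}(P_1,P_2)$ is the $\underline\Bbbk$-subalgebra of $\Bbbk(x_1,x_2)$ generated by all $x_k$. *)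

From HB Require Import structures.
From mathcomp Require Import all_boot all_order all_algebra.
Set Implicit Arguments. Unset Strict Implicit. Unset Printing Implicit Defensive.
Import Order.TTheory GRing.Theory Num.Theory.
Local Open Scope ring_scope.

Definition posp (a : int) : nat := if a is Posz n then n else 0%N.

Section GenCluster.
Variable k : fieldType.

(* k(z) = Frac(k[z]) ; used to state palindromicity literally. *)
Definition kz := {fraction {poly k}}.
Definition toKz (c : k) : kz := FracField.tofrac (c%:P).

Definition palindromic (P : {poly k}) : Prop :=
  let z : kz := FracField.tofrac ('X : {poly k}) in
  (map_poly toKz P).[z] = z ^+ (size P).-1 * (map_poly toKz P).[z^-1].

(* k(x1,x2) = Frac(k[x1][x2]); x1 = constant polynomial 'X, x2 = 'X. *)
Definition K2 := {fraction {poly {poly k}}}.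
Definition embK (c : k) : K2 := FracField.tofrac ((c%:P)%:P).
Definition X1 : K2 := FracField.tofrac (('X : {poly k})%:P).
Definition X2 : K2 := FracField.tofrac ('X : {poly {poly k}}).

Variables P1 P2 : {poly k}.

(* the exchange polynomial used in x_{j+1} x_{j-1} = P(x_j):
   P1 if j even, P2 if j odd *)
Definition Pat (j : nat) : {poly k} := if odd j then P2 else P1.
Definition evalK (P : {poly k}) (y : K2) : K2 := (map_poly embK P).[y].

(* fwd n = (x_{n+1}, x_{n+2}) *)
Fixpoint fwd (n : nat) : K2 * K2 :=
  match n with
  | 0 => (X1, X2)
  | m.+1 => let: (a, b) := fwd m in (b, evalK (Pat m.+2) b / a)
  end.

(* bwd n = (x_{1-n}, x_{2-n}) *)
Fixpoint bwd (n : nat) : K2 * K2 :=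
  match n with
  | 0 => (X1, X2)
  | m.+1 => let: (a, b) := bwd m in (evalK (Pat m.+1) a / b, a)
  end.

Definition xk (j : int) : K2 :=
  match j with
  | Posz 0 => (bwd 1).1
  | Posz n.+1 => (fwd n).1
  | Negz m => (bwd m.+2).1
  end.

Inductive gen_ring (R : ringType) (G : R -> Prop) : R -> Prop :=
  | gen_base x : G x -> gen_ring G x
  | gen_one : gen_ring G 1
  | gen_add x y : gen_ring G x -> gen_ring G y -> gen_ring G (x + y)
  | gen_opp x : gen_ring G x -> gen_ring G (- x)
  | gen_mul x y : gen_ring G x -> gen_ring G y -> gen_ring G (x * y).

Definition kbar : k -> Prop :=
  gen_ring (fun c => exists i, c = P1`_i \/ c = P2`_i).

(* A(P1,P2): kbar-subalgebra of k(x1,x2) generated by all x_j, i.e. the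
   subring generated by the image of kbar together with all x_j *)
Definition Aclu : K2 -> Prop :=
  gen_ring (fun f => (exists c, kbar c /\ f = embK c) \/ (exists j, f = xk j)).

Definition zmon (j : int) (a : int * int) : K2 :=
  xk (j - 1) ^+ posp a.2 * xk j ^+ posp (- a.1)
  * xk (j + 1) ^+ posp (- a.2) * xk (j + 2) ^+ posp a.1.

End GenCluster.

Definition is_basis (k : fieldType) (V : ringType) (emb : k -> V)
  (D : k -> Prop) (A : V -> Prop) (I : eqType) (b : I -> V) : Prop :=
  [/\ forall i, A (b i),
      forall f, A f -> exists (S : seq I) (c : I -> k),
          (forall i, D (c i)) /\ f = \sum_(i <- S) emb (c i) * b i
    & forall (S : seq I) (c : I -> k), uniq S -> (forall i, i \in S -> D (c i)) ->
          \sum_(i <- S) emb (c i) * b i = 0 -> forall i, i \in S -> c i = 0].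

From HB Require Import structures.
From mathcomp Require Import all_boot all_order all_algebra ring zify.
Set Implicit Arguments. Unset Strict Implicit. Unset Printing Implicit Defensive.
Import Order.TTheory GRing.Theory Num.Theory.
Local Open Scope ring_scope.

(* Write [a, b, c, d] for [x_{j-1}, ..., x_{j+2}] and [P, Q] for the exchange
   polynomials, so that [a c = P(b)] and [b d = Q(c)].
   Spanning: as [Q(0) = 1], [b d - 1 = c S] for a polynomial [S] in [c]; as [P]
   is palindromic of degree [e], [P(d) - d^e P(b)] is a multiple of [b d - 1].
   Hence [x_{j+3} c = P(d) = a c d^e + c S (...)], so [x_{j+3}] (and likewise
   [x_{j-2}]) is a polynomial in [a, b, c, d]: the algebra is generated by the
   window [a, b, c, d], and the exchange relations rewrite every monomial in them
   into standard ones.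
   Independence: consecutive [x_n] are algebraically independent. Multiplied by
   [b^N c^N], the monomial [z_j[a1, a2]] becomes [P(b)^p b^(N-a1) Q(c)^s c^(N-a2)];
   as [P(0) = Q(0) = 1], the least exponent [(N-a1, N-a2)] among the nonzero
   coefficients of a relation occurs in a single term. *)

Section GenRing.
Variables (R : nzRingType) (G : R -> Prop).
Local Notation L := (gen_ring G).

Lemma gen_ring_min (S : R -> Prop) :
  S 1 -> (forall u v, S u -> S v -> S (u + v)) -> (forall u, S u -> S (- u)) ->
  (forall u v, S u -> S v -> S (u * v)) -> (forall u, G u -> S u) ->
  forall u, L u -> S u.
Proof. by move=> S1 SD SN SM SG u; elim=> *; auto. Qed.

Lemma gen_ring_sub (G' : R -> Prop) :
  (forall u, G u -> gen_ring G' u) -> forall u, L u -> gen_ring G' u.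
Proof. by apply: gen_ring_min; constructor. Qed.

Lemma gen_ring0 : L 0.
Proof. by rewrite -(subrr 1); do !constructor. Qed.

Lemma gen_ringB u v : L u -> L v -> L (u - v).
Proof. by move=> Lu Lv; constructor => //; constructor. Qed.

Lemma gen_ringX u n : L u -> L (u ^+ n).
Proof. by move=> Lu; elim: n => [|n IH]; rewrite ?expr0 ?exprS; constructor. Qed.

Lemma gen_ring_sum (I : Type) (r : seq I) (P : pred I) (F : I -> R) :
  (forall i, P i -> L (F i)) -> L (\sum_(i <- r | P i) F i).
Proof. by apply: big_ind => //; [exact: gen_ring0 | constructor]. Qed.

End GenRing.

Section PolyCoef.
Variable R : nzRingType.
Implicit Types p : {poly R}.

Lemma poly_sum_monomials p :
  p = \sum_(i < size p) (p`_i)%:P * 'X^i.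
Proof. by rewrite -[LHS]coefK poly_def; apply: eq_bigr => i _; rewrite mul_polyC. Qed.

Lemma poly_eq0_coef p :
  (forall i, (i < size p)%N -> p`_i = 0) -> p = 0.
Proof.
by move=> p0; rewrite (poly_sum_monomials p) big1 // => i _; rewrite p0 // mul0r.
Qed.

End PolyCoef.

Section Field.
Variable k : fieldType.
Local Notation K2 := (K2 k).
Implicit Types (p q : {poly k}) (u v y : K2).

Lemma embK_is_zmod_morphism : zmod_morphism (@embK k).
Proof. by move=> a b; rewrite /embK !rmorphB. Qed.
HB.instance Definition _ :=
  GRing.isZmodMorphism.Build k K2 (@embK k) embK_is_zmod_morphism.
Lemma embK_is_monoid_morphism : monoid_morphism (@embK k).
Proof. by split=> [|a b]; rewrite /embK ?rmorph1 ?rmorphM. Qed.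
HB.instance Definition _ :=
  GRing.isMonoidMorphism.Build k K2 (@embK k) embK_is_monoid_morphism.

Lemma toKz_is_zmod_morphism : zmod_morphism (@toKz k).
Proof. by move=> a b; rewrite /toKz !rmorphB. Qed.
HB.instance Definition _ :=
  GRing.isZmodMorphism.Build k (kz k) (@toKz k) toKz_is_zmod_morphism.
Lemma toKz_is_monoid_morphism : monoid_morphism (@toKz k).
Proof. by split=> [|a b]; rewrite /toKz ?rmorph1 ?rmorphM. Qed.
HB.instance Definition _ :=
  GRing.isMonoidMorphism.Build k (kz k) (@toKz k) toKz_is_monoid_morphism.

Lemma evalKM p q y : evalK (p * q) y = evalK p y * evalK q y.
Proof. by rewrite /evalK rmorphM hornerM. Qed.
Lemma evalKX p n y : evalK (p ^+ n) y = evalK p y ^+ n.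
Proof. by rewrite /evalK rmorphXn horner_exp. Qed.
Lemma evalK_X y : evalK 'X y = y.
Proof. by rewrite /evalK map_polyX hornerX. Qed.
Lemma evalK_C c y : evalK c%:P y = embK c.
Proof. by rewrite /evalK map_polyC hornerC. Qed.
Lemma evalKE p y : evalK p y = \sum_(i < size p) embK p`_i * y ^+ i.
Proof.
rewrite /evalK horner_coef size_map_poly.
by apply: eq_bigr => i _; rewrite coef_map.
Qed.

Lemma palindromic_coef p : palindromic p ->
  forall i, (i < size p)%N -> p`_i = p`_((size p).-1 - i).
Proof.
rewrite /palindromic; set z : kz k := FracField.tofrac 'X.
set n := size p; set e := n.-1; have z_neq0 : z != 0 by rewrite tofrac_eq0 polyX_eq0.
rewrite !horner_coef size_map_poly.
have -> : \sum_(i < n) (map_poly (@toKz k) p)`_i * z ^+ i = FracField.tofrac p.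
  rewrite [in RHS](poly_sum_monomials p) rmorph_sum; apply: eq_bigr => i _.
  by rewrite coef_map rmorphM rmorphXn.
have -> : z ^+ e * \sum_(i < n) (map_poly (@toKz k) p)`_i * z^-1 ^+ i =
    FracField.tofrac (\sum_(i < n) (p`_i)%:P * 'X^(e - i)).
  rewrite mulr_sumr rmorph_sum; apply: eq_bigr => i _.
  rewrite coef_map rmorphM rmorphXn /= -/z exprVn mulrCA; congr (_ * _).
  have ie : (i <= e)%N by rewrite /e -ltnS (ltn_predK (ltn_ord i)).
  by rewrite -[in z ^+ e](subnK ie) exprD (mulfK (expf_neq0 i z_neq0)).
move=> /eqP; rewrite tofrac_eq => /eqP E i lt_ip.
rewrite (congr1 (fun q => q`_(e - i)) E) coef_sum (bigD1 (Ordinal lt_ip)) //=.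
rewrite coefCM coefXn eqxx mulr1.
rewrite big1 ?addr0 // => l /eqP l_neq_i; rewrite coefCM coefXn.
suff /negPf -> : (e - i != e - l)%N by rewrite mulr0.
apply/eqP => eq_il; apply: l_neq_i; apply: val_inj => /=.
by have := ltn_ord l; rewrite /e /n in eq_il *; lia.
Qed.

Lemma monic_palindromic_coef0 p : p \is monic -> palindromic p -> p`_0 = 1.
Proof.
move=> mon_p pal_p; have p_gt0 : (0 < size p)%N by rewrite size_poly_gt0 monic_neq0.
by rewrite (palindromic_coef pal_p p_gt0) subn0; apply/eqP.
Qed.

Lemma evalK_palindromic p y : palindromic p ->
  evalK p y = \sum_(i < size p) embK p`_i * y ^+ ((size p).-1 - i).
Proof.
move=> pal_p; rewrite evalKE (reindex_inj rev_ord_inj) /=.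
apply: eq_bigr => i _; have lt_ip := ltn_ord i.
have le_ip : (i <= (size p).-1)%N by rewrite -ltnS (ltn_predK lt_ip).
have -> : (size p - i.+1 = (size p).-1 - i)%N by lia.
rewrite (palindromic_coef pal_p) ?subKn //.
by rewrite (leq_ltn_trans (leq_subr _ _)) // ltn_predL (leq_ltn_trans _ lt_ip).
Qed.

Lemma palindromic_exchange_mem (G : K2 -> Prop) (a b c d y : K2) (P Q : {poly k}) :
  (forall i, gen_ring G (embK P`_i)) -> (forall i, gen_ring G (embK Q`_i)) ->
  gen_ring G a -> gen_ring G b -> gen_ring G c -> gen_ring G d ->
  palindromic P -> Q`_0 = 1 -> c != 0 ->
  a * c = evalK P b -> b * d = evalK Q c -> y * c = evalK P d -> gen_ring G y.
Proof.
move=> GP GQ Ga Gb Gc Gd pal_P Q0 c_neq0 ac_eq bd_eq yc_eq.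
set e := (size P).-1.
have Q_gt0 : (0 < size Q)%N.
  by rewrite size_poly_gt0; apply: contra_eq_neq Q0 => ->; rewrite coef0 eq_sym oner_eq0.
pose S := \sum_(i < (size Q).-1) embK Q`_i.+1 * c ^+ i.
have bd1_eq : b * d - 1 = c * S.
  rewrite bd_eq evalKE -(ltn_predK Q_gt0) big_ord_recl /= Q0 rmorph1 mul1r.
  rewrite addrAC subrr add0r mulr_sumr; apply: eq_bigr => i _; rewrite exprS; ring.
pose T i := embK P`_i * d ^+ (e - i) * \sum_(l < i) (b * d) ^+ l.
suff -> : y = a * d ^+ e - S * \sum_(i < size P) T i.
  apply: gen_ringB; first by constructor => //; apply: gen_ringX.
  constructor; first by apply: gen_ring_sum => i _; constructor => //; apply: gen_ringX.
  apply: gen_ring_sum => i _; constructor; first by constructor => //; apply: gen_ringX.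
  by apply: gen_ring_sum => l _; apply: gen_ringX; constructor.
apply: (mulIf c_neq0); rewrite yc_eq evalK_palindromic // -/e mulrBl.
rewrite -mulrA [d ^+ e * c]mulrC mulrA ac_eq.
have -> : S * (\sum_(i < size P) T i) * c = (c * S) * \sum_(i < size P) T i by ring.
rewrite -bd1_eq evalKE mulr_suml mulr_sumr -sumrB; apply: eq_bigr => i _.
have ie : (i <= e)%N by rewrite /e -ltnS (ltn_predK (ltn_ord i)).
have -> : (b * d - 1) * T i = embK P`_i * d ^+ (e - i) * ((b * d) ^+ i - 1).
  by rewrite subrX1 /T; ring.
by rewrite exprMn -[in d ^+ e](subnK ie) exprD; ring.
Qed.

Definition eval2 u v (G : {poly {poly k}}) : K2 :=
  (map_poly (map_poly (@embK k)) G).[u%:P].[v].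

Lemma eval2M u v G H : eval2 u v (G * H) = eval2 u v G * eval2 u v H.
Proof. by rewrite /eval2 rmorphM !hornerM. Qed.
Lemma eval2X u v G n : eval2 u v (G ^+ n) = eval2 u v G ^+ n.
Proof. by rewrite /eval2 rmorphXn !horner_exp. Qed.
Lemma eval2_sum u v (I : Type) (r : seq I) (F : I -> {poly {poly k}}) :
  eval2 u v (\sum_(i <- r) F i) = \sum_(i <- r) eval2 u v (F i).
Proof. by rewrite /eval2 !rmorph_sum /= !horner_sum. Qed.
Lemma eval2_polyC u v p : eval2 u v p%:P = evalK p v.
Proof. by rewrite /eval2 map_polyC hornerC. Qed.
Lemma eval2_map_polyC u v p : eval2 u v (map_poly polyC p) = evalK p u.
Proof.
rewrite /eval2 -map_poly_comp.
have -> : map_poly (map_poly (@embK k) \o polyC) p =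
          map_poly polyC (map_poly (@embK k) p).
  by rewrite -map_poly_comp; apply: eq_map_poly => c /=; rewrite map_polyC.
by rewrite horner_map hornerC.
Qed.
Lemma eval2_X u v : eval2 u v 'X = u.
Proof. by rewrite /eval2 map_polyX hornerX hornerC. Qed.
Lemma eval2E u v G : eval2 u v G = \sum_(i < size G) evalK G`_i v * u ^+ i.
Proof.
rewrite {1}(poly_sum_monomials G) eval2_sum.
by apply: eq_bigr => i _; rewrite eval2M eval2_polyC eval2X eval2_X.
Qed.

Definition alg_indep u v := forall G, eval2 u v G = 0 -> G = 0.

Lemma alg_indep_sym u v : alg_indep u v -> alg_indep v u.
Proof.
move=> uv G Gvu; apply/eqP; rewrite -swapXY_eq0; apply/eqP; apply: uv.
by rewrite /eval2 -swapXY_map horner2_swapXY.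
Qed.

Lemma alg_indep_neq0 u v : alg_indep u v -> u != 0.
Proof.
move=> uv; apply/eqP=> u0; have := uv 'X.
by rewrite eval2_X u0 => /(_ erefl) /eqP; rewrite polyX_eq0.
Qed.

(* [u^N G(Q(v)/u, v) = H(u, v)], where [H] has coefficients [G_i Q^i]. *)
Lemma alg_indep_exchange u v Q : Q != 0 -> alg_indep u v -> alg_indep v (evalK Q v / u).
Proof.
move=> Q_neq0 uv; apply: alg_indep_sym => G; set w := evalK Q v / u => Gw0.
have u_neq0 := alg_indep_neq0 uv; set N := size G.
pose H := \sum_(i < N) (G`_i * Q ^+ i)%:P * 'X^(N - i).
have H0 : H = 0.
  apply: uv; suff -> : eval2 u v H = eval2 w v G * u ^+ N by rewrite Gw0 mul0r.
  rewrite (eval2E w) mulr_suml eval2_sum; apply: eq_bigr => i _.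
  rewrite eval2M eval2_polyC eval2X eval2_X evalKM evalKX.
  have -> : u ^+ N = u ^+ i * u ^+ (N - i) by rewrite -exprD subnKC // ltnW.
  by rewrite -[evalK Q v](divfK u_neq0) -/w exprMn; ring.
apply: poly_eq0_coef => i; rewrite -/N => lt_iN; apply/eqP.
have : H`_(N - i) = G`_i * Q ^+ i.
  rewrite coef_sum (bigD1 (Ordinal lt_iN)) //= coefCM coefXn eqxx mulr1.
  rewrite big1 ?addr0 // => l /eqP l_neq_i; rewrite coefCM coefXn.
  suff /negPf -> : (N - i != N - l)%N by rewrite mulr0.
  apply/eqP => eq_il; apply: l_neq_i; apply: val_inj => /=.
  by have := ltn_ord l; lia.
by rewrite H0 coef0 => /esym/eqP; rewrite mulf_eq0 expf_eq0 (negPf Q_neq0) andbF orbF.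
Qed.

Lemma eval2_X2_X1 G : eval2 (X2 k) (X1 k) G = FracField.tofrac G.
Proof.
rewrite eval2E [in RHS](poly_sum_monomials G) rmorph_sum /=; apply: eq_bigr => i _.
rewrite rmorphM rmorphXn evalKE [in RHS](poly_sum_monomials G`_i) !rmorph_sum /=.
congr (_ * _); apply: eq_bigr => l _.
by rewrite !rmorphM !rmorphXn.
Qed.

Lemma alg_indep_X2_X1 : alg_indep (X2 k) (X1 k).
Proof. by move=> G; rewrite eval2_X2_X1 => /eqP; rewrite tofrac_eq0 => /eqP. Qed.

Lemma sum_collect (I : eqType) (D : k -> Prop) (b : I -> K2) (l : seq (k * I)) :
  D 0 -> (forall c1 c2, D c1 -> D c2 -> D (c1 + c2)) -> (forall t, t \in l -> D t.1) ->
  exists (S : seq I) (c : I -> k), [/\ uniq S, forall i, D (c i) &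
    \sum_(t <- l) embK t.1 * b t.2 = \sum_(i <- S) embK (c i) * b i].
Proof.
move=> D0 DD; elim: l => [|[e i] l IH] Dl.
  by exists [::], (fun=> 0); split=> //; rewrite !big_nil.
rewrite big_cons /=; have [|S [c [uS Dc ->]]] := IH.
  by move=> t tl; apply: Dl; rewrite inE tl orbT.
have De : D e by have := Dl (e, i); rewrite inE eqxx => /(_ isT).
have [iS | iNS] := boolP (i \in S).
  exists S, (fun i' => if i' == i then e + c i' else c i'); split=> //.
    by move=> i'; case: ifP => _; [apply: DD | ].
  rewrite (bigD1_seq i iS uS) [in RHS](bigD1_seq i iS uS) /= eqxx rmorphD.
  rewrite [in RHS](eq_bigr (fun i' => embK (c i') * b i')) => [|i' /negPf -> //].
  by rewrite mulrDl addrA.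
exists (i :: S), (fun i' => if i' == i then e else c i'); split=> //=.
- by rewrite iNS.
- by move=> i'; case: ifP.
rewrite big_cons eqxx; congr (_ + _); apply: eq_big_seq => i' i'S.
by case: eqP i'S => // ->; rewrite (negPf iNS).
Qed.

Lemma coef_tensor (c : k) (A B : {poly k}) i l :
  ((c%:P%:P * map_poly polyC A * B%:P)`_i)`_l = c * A`_i * B`_l.
Proof. by rewrite coefMC coefCM coef_map /= -polyCM coefCM. Qed.

(* Pick [i0] minimising [m] and then [n] among the nonzero coefficients: the
   [(m i0, n i0)] coefficient of the sum only receives [cf i0 * U`_0 * V`_0]. *)
Lemma lowest_terms_free (I : eqType) (S : seq I) (cf : I -> k)
    (U V : I -> {poly k}) (m n : I -> nat) :
  uniq S -> {in S &, injective (fun i => (m i, n i))} ->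
  (forall i, (U i)`_0 != 0) -> (forall i, (V i)`_0 != 0) ->
  \sum_(i <- S) (cf i)%:P%:P * map_poly polyC (U i * 'X^(m i)) * (V i * 'X^(n i))%:P
    = 0 ->
  {in S, forall i, cf i = 0}.
Proof.
move=> uS inj_mn U0 V0 sum0 i iS; apply/eqP; apply: contraT => cf_i.
have ex_m : exists e, has (fun i => (cf i != 0) && (m i == e)) S.
  by exists (m i); apply/hasP; exists i; rewrite ?cf_i ?eqxx.
case: (ex_minnP ex_m) => m0 /hasP [i1 i1S /andP [cf_i1 /eqP m_i1]] m0_min.
have ex_n : exists e, has (fun i => [&& cf i != 0, m i == m0 & n i == e]) S.
  by exists (n i1); apply/hasP; exists i1; rewrite ?cf_i1 ?m_i1 ?eqxx.
case: (ex_minnP ex_n) => n0 /hasP [i0 i0S /and3P [cf_i0 /eqP m_i0 /eqP n_i0]] n0_min.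
have := congr1 (fun G : {poly {poly k}} => G`_m0`_n0) sum0.
rewrite /= !coef0 !coef_sum (bigD1_seq i0 i0S uS) /= big1_seq.
  rewrite addr0 coef_tensor !coefMXn -m_i0 -n_i0 !ltnn !subnn => /eqP.
  by rewrite !mulf_eq0 (negPf cf_i0) (negPf (U0 i0)) (negPf (V0 i0)).
move=> l /andP [l_neq_i0 lS]; rewrite coef_tensor !coefMXn.
have [-> | cf_l] := eqVneq (cf l) 0; first by rewrite !mul0r.
have le_m : (m0 <= m l)%N by apply: m0_min; apply/hasP; exists l; rewrite ?cf_l ?eqxx.
case: ltnP => [_ | ge_m]; first by rewrite mulr0 mul0r.
have m_l : m l = m0 by apply/eqP; rewrite eqn_leq ge_m le_m.
have le_n : (n0 <= n l)%N.
  by apply: n0_min; apply/hasP; exists l; rewrite ?cf_l ?m_l ?eqxx.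
case: ltnP => [_ | ge_n]; first by rewrite mulr0.
have n_l : n l = n0 by apply/eqP; rewrite eqn_leq ge_n le_n.
by move: l_neq_i0; rewrite (inj_mn l i0) ?eqxx ?m_l ?n_l ?m_i0 ?n_i0.
Qed.

Variables P1 P2 : {poly k}.
Hypotheses (mon_P1 : P1 \is monic) (mon_P2 : P2 \is monic).
Local Notation x := (xk P1 P2).

Definition Pex (n : int) : {poly k} := if odd (absz n) then P2 else P1.

Lemma Pex_monic n : Pex n \is monic.
Proof. by rewrite /Pex; case: ifP. Qed.

Lemma Pat_neq0 n : Pat P1 P2 n != 0.
Proof. by rewrite /Pat monic_neq0 //; case: ifP. Qed.

Lemma PexD2 n : Pex (n + 2) = Pex n.
Proof.
rewrite /Pex; case: n => [m|[|[|m]]] //.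
- have -> : absz (m%:Z + 2) = m.+2 by lia.
  by rewrite /= negbK.
- have -> : absz (Negz m.+2 + 2) = m.+1 by lia.
  have -> : absz (Negz m.+2) = m.+3 by lia.
  by rewrite /= negbK.
Qed.

Lemma x_fwd (m : nat) :
  x m.+3%:Z = evalK (Pat P1 P2 m.+2) (x m.+2%:Z) / x m.+1%:Z.
Proof. by rewrite /xk /=; case: (fwd P1 P2 m). Qed.

Lemma x_bwd1 (m : nat) : x (1 - m%:Z) = (bwd P1 P2 m).1.
Proof. by case: m => [|[|m]] //; have -> : 1 - m.+2%:Z = Negz m by lia. Qed.

Lemma x_bwd2 (m : nat) : x (2 - m%:Z) = (bwd P1 P2 m).2.
Proof.
case: m => [|m] //; have -> : 2 - m.+1%:Z = 1 - m%:Z by lia.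
by rewrite x_bwd1 /=; case: (bwd P1 P2 m).
Qed.

Lemma x_bwd (m : nat) :
  x (1 - m.+1%:Z) = evalK (Pat P1 P2 m.+1) (x (1 - m%:Z)) / x (2 - m%:Z).
Proof. by rewrite !x_bwd1 x_bwd2 /=; case: (bwd P1 P2 m). Qed.

Lemma alg_indep_x n : alg_indep (x n) (x (n + 1)).
Proof.
have fwd_indep m : alg_indep (x m.+1%:Z) (x m.+2%:Z).
  elim: m => [|m IH]; first exact: alg_indep_sym alg_indep_X2_X1.
  by rewrite x_fwd; apply: alg_indep_exchange IH; apply: Pat_neq0.
have bwd_indep m : alg_indep (x (1 - m%:Z)) (x (2 - m%:Z)).
  elim: m => [|m IH]; first exact: alg_indep_sym alg_indep_X2_X1.
  have -> : 2 - m.+1%:Z = 1 - m%:Z by lia.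
  apply: alg_indep_sym; rewrite x_bwd.
  by apply: alg_indep_exchange (alg_indep_sym IH); apply: Pat_neq0.
have reindex_x a b a' b' :
    alg_indep (x a) (x b) -> a = a' -> b = b' -> alg_indep (x a') (x b').
  by move=> ? <- <-.
case: n => [[|m]|m].
- by apply: reindex_x (bwd_indep 1%N) _ _; lia.
- by apply: reindex_x (fwd_indep m) _ _; lia.
- by apply: reindex_x (bwd_indep m.+2) _ _; lia.
Qed.

Lemma x_neq0 n : x n != 0.
Proof. exact: alg_indep_neq0 (@alg_indep_x n). Qed.

Lemma x_exchange n : x (n + 1) * x (n - 1) = evalK (Pex n) (x n).
Proof.
have fwd_eq m : x (m.+2%:Z + 1) * x (m.+2%:Z - 1) = evalK (Pex m.+2%:Z) (x m.+2%:Z).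
  have -> : m.+2%:Z + 1 = m.+3%:Z by lia.
  have -> : m.+2%:Z - 1 = m.+1%:Z by lia.
  by rewrite x_fwd divfK ?x_neq0.
have bwd_eq m :
    x ((1 - m%:Z) + 1) * x ((1 - m%:Z) - 1) = evalK (Pex (1 - m%:Z)) (x (1 - m%:Z)).
  have -> : (1 - m%:Z) + 1 = 2 - m%:Z by lia.
  have -> : (1 - m%:Z) - 1 = 1 - m.+1%:Z by lia.
  rewrite x_bwd mulrC divfK ?x_neq0 //; congr evalK.
  rewrite /Pex /Pat; case: m => [|m] //.
  have -> : absz (1 - m.+1%:Z) = m by lia.
  by rewrite /= negbK.
case: n => [[|[|m]]|m].
- by have := bwd_eq 1%N; have -> : 1 - 1%:Z = 0 by lia.
- by have := bwd_eq 0%N; have -> : 1 - 0%:Z = 1 by lia.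
- exact: fwd_eq.
- by have := bwd_eq m.+2; have -> : 1 - m.+2%:Z = Negz m by lia.
Qed.

Lemma x_exchangeE n a b : a = n + 1 -> b = n - 1 -> x a * x b = evalK (Pex n) (x n).
Proof. by move=> -> ->; apply: x_exchange. Qed.

Hypotheses (pal_P1 : palindromic P1) (pal_P2 : palindromic P2).

Lemma Pex_palindromic n : palindromic (Pex n).
Proof. by rewrite /Pex; case: ifP. Qed.

Lemma Pex_coef0 n : (Pex n)`_0 = 1.
Proof. exact: monic_palindromic_coef0 (Pex_monic n) (Pex_palindromic n). Qed.

Lemma kbar_Pex n i : kbar P1 P2 (Pex n)`_i.
Proof. by constructor; exists i; rewrite /Pex; case: ifP => _; [right | left]. Qed.

Definition window (j : int) (f : K2) :=
  (exists2 c, kbar P1 P2 c & f = embK c) \/ exists2 n, j - 1 <= n <= j + 2 & f = x n.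
Definition Awin j := gen_ring (window j).

Lemma Awin_embK j c : kbar P1 P2 c -> Awin j (embK c).
Proof. by move=> kc; constructor; left; exists c. Qed.

Lemma Awin_x_near j n : j - 1 <= n <= j + 2 -> Awin j (x n).
Proof. by move=> near_n; constructor; right; exists n. Qed.

Lemma Awin_next j : Awin j (x (j + 3)).
Proof.
apply: (palindromic_exchange_mem (a := x (j - 1)) (b := x j) (c := x (j + 1))
          (d := x (j + 2)) (P := Pex j) (Q := Pex (j + 1))).
all: try by move=> i; apply/Awin_embK/kbar_Pex.
all: try by apply: Awin_x_near; apply/andP; split; lia.
- exact: Pex_palindromic.
- exact: Pex_coef0.
- exact: x_neq0.
- by rewrite mulrC; apply: x_exchangeE; lia.
- by rewrite mulrC; apply: x_exchangeE; lia.
- by rewrite -PexD2; apply: x_exchangeE; lia.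
Qed.

Lemma Awin_prev j : Awin j (x (j - 2)).
Proof.
apply: (palindromic_exchange_mem (a := x (j + 2)) (b := x (j + 1)) (c := x j)
          (d := x (j - 1)) (P := Pex (j + 1)) (Q := Pex j)).
all: try by move=> i; apply/Awin_embK/kbar_Pex.
all: try by apply: Awin_x_near; apply/andP; split; lia.
- exact: Pex_palindromic.
- exact: Pex_coef0.
- exact: x_neq0.
- by apply: x_exchangeE; lia.
- by apply: x_exchangeE; lia.
- by rewrite mulrC (_ : j + 1 = j - 1 + 2) ?PexD2; [apply: x_exchangeE | ]; lia.
Qed.

Lemma Awin_succ_sub j f : Awin (j + 1) f -> Awin j f.
Proof.
apply: gen_ring_sub => g [[c kc ->] | [n /andP [ge_n le_n] ->]]; first exact: Awin_embK.
have [le_n2 | gt_n2] := lerP n (j + 2).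
  by apply: Awin_x_near; apply/andP; split; lia.
by rewrite (_ : n = j + 3); [apply: Awin_next | lia].
Qed.

Lemma Awin_pred_sub j f : Awin (j - 1) f -> Awin j f.
Proof.
apply: gen_ring_sub => g [[c kc ->] | [n /andP [ge_n le_n] ->]]; first exact: Awin_embK.
have [ge_n1 | lt_n1] := lerP (j - 1) n.
  by apply: Awin_x_near; apply/andP; split; lia.
by rewrite (_ : n = j - 2); [apply: Awin_prev | lia].
Qed.

Lemma Awin_x j n : Awin j (x n).
Proof.
have far m : (forall f, Awin (j + m%:Z) f -> Awin j f) /\
             (forall f, Awin (j - m%:Z) f -> Awin j f).
  elim: m => [|m [IHu IHd]]; first by split=> f; rewrite ?addr0 ?subr0.
  split=> f.
  - by rewrite (_ : j + m.+1%:Z = j + m%:Z + 1) => [/Awin_succ_sub/IHu //|]; lia.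
  - by rewrite (_ : j - m.+1%:Z = j - m%:Z - 1) => [/Awin_pred_sub/IHd //|]; lia.
have x_n : Awin n (x n) by apply: Awin_x_near; apply/andP; split; lia.
have [le_jn | lt_nj] := lerP j n.
  by apply: (proj1 (far (absz (n - j)))); rewrite (_ : j + _ = n) //; lia.
by apply: (proj2 (far (absz (n - j)))); rewrite (_ : j - _ = n) //; lia.
Qed.

Lemma Aclu_sub_Awin j f : Aclu P1 P2 f -> Awin j f.
Proof.
apply: gen_ring_sub => g [[c [kc ->]] | [n ->]]; last exact: Awin_x.
exact: Awin_embK.
Qed.

Lemma posp_subn (m n : nat) : posp (m%:Z - n%:Z) = (m - n)%N.
Proof.
have [le_nm | lt_mn] := leqP n m.
  by have -> : m%:Z - n%:Z = (m - n)%N by lia.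
have -> : (m - n = 0)%N by lia.
by have -> : m%:Z - n%:Z = Negz (n - m).-1 by rewrite NegzE; lia.
Qed.

Lemma posp_opp_sub (e : int) : (posp (- e))%:Z - (posp e)%:Z = - e.
Proof. by case: e => [[|n]|n] //=; rewrite ?sub0r ?subr0. Qed.

Section StandardMonomials.
Variable j : int.
Local Notation z := (zmon P1 P2 j).
Local Notation a := (x (j - 1)).
Local Notation b := (x j).
Local Notation c := (x (j + 1)).
Local Notation d := (x (j + 2)).

Definition mono (p q r s : nat) := a ^+ p * b ^+ q * c ^+ r * d ^+ s.

Lemma zmonE al : z al = mono (posp al.2) (posp (- al.1)) (posp (- al.2)) (posp al.1).
Proof. by []. Qed.

Lemma monoM (p q r s p' q' r' s' : nat) :
  mono p q r s * mono p' q' r' s' = mono (p + p') (q + q') (r + r') (s + s').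
Proof. by rewrite /mono !exprD; ring. Qed.

Lemma mono_zmon (p q r s : nat) : (p * r = 0)%N -> (q * s = 0)%N ->
  mono p q r s = z (s%:Z - q%:Z, p%:Z - r%:Z).
Proof.
move=> /eqP; rewrite muln_eq0 => pr0 /eqP; rewrite muln_eq0 => qs0.
rewrite zmonE /= !opprB !posp_subn.
by case/orP: pr0 => /eqP ->; case/orP: qs0 => /eqP ->; rewrite ?subn0 ?sub0n.
Qed.

Lemma x_exchange_ac : a * c = evalK (Pex j) b.
Proof. by rewrite mulrC; apply: x_exchangeE; lia. Qed.

Lemma x_exchange_bd : b * d = evalK (Pex (j + 1)) c.
Proof. by rewrite mulrC; apply: x_exchangeE; lia. Qed.

Lemma mono_exchange_ac (p q r s : nat) :
  mono p.+1 q r.+1 s = \sum_(i < size (Pex j)) embK (Pex j)`_i * mono p (q + i) r s.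
Proof.
have -> : mono p.+1 q r.+1 s = mono p q r s * (a * c) by rewrite /mono !exprS; ring.
rewrite x_exchange_ac evalKE mulr_sumr; apply: eq_bigr => i _.
by rewrite /mono exprD; ring.
Qed.

Lemma mono_exchange_bd (p q r s : nat) :
  mono p q.+1 r s.+1 =
  \sum_(i < size (Pex (j + 1))) embK (Pex (j + 1))`_i * mono p q (r + i) s.
Proof.
have -> : mono p q.+1 r s.+1 = mono p q r s * (b * d) by rewrite /mono !exprS; ring.
rewrite x_exchange_bd evalKE mulr_sumr; apply: eq_bigr => i _.
by rewrite /mono exprD; ring.
Qed.

Definition zspan (f : K2) := exists l : seq (k * (int * int)),
  (forall t, t \in l -> kbar P1 P2 t.1) /\ f = \sum_(t <- l) embK t.1 * z t.2.

Lemma zspan0 : zspan 0.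
Proof. by exists [::]; rewrite big_nil. Qed.

Lemma zspanD f g : zspan f -> zspan g -> zspan (f + g).
Proof.
move=> [l1 [kl1 ->]] [l2 [kl2 ->]]; exists (l1 ++ l2); rewrite big_cat.
by split=> // t; rewrite mem_cat => /orP [/kl1 | /kl2].
Qed.

Lemma zspanZ e f : kbar P1 P2 e -> zspan f -> zspan (embK e * f).
Proof.
move=> ke [l [kl ->]]; exists [seq (e * t.1, t.2) | t <- l]; split.
  by move=> t /mapP [u ul ->]; constructor => //; apply: kl.
by rewrite big_map mulr_sumr; apply: eq_bigr => t _; rewrite rmorphM mulrA.
Qed.

Lemma zspan_sum (I : Type) (r : seq I) (P : pred I) (F : I -> K2) :
  (forall i, P i -> zspan (F i)) -> zspan (\sum_(i <- r | P i) F i).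
Proof. by apply: big_ind => //; [exact: zspan0 | exact: zspanD]. Qed.

Lemma zspan_zmon al : zspan (z al).
Proof.
exists [:: (1, al)]; rewrite big_seq1 rmorph1 mul1r; split=> // t.
by rewrite inE => /eqP ->; constructor.
Qed.

(* Each exchange lowers the total degree in [a] and [d]. *)
Lemma zspan_mono (p q r s : nat) : zspan (mono p q r s).
Proof.
have [N] := ubnP (p + s); elim: N p q r s => // N IH p q r s lt_ps.
have [pr0 | pr_neq0] := eqVneq (p * r)%N 0.
  have [qs0 | qs_neq0] := eqVneq (q * s)%N 0.
    by rewrite mono_zmon //; apply: zspan_zmon.
  case: q s qs_neq0 lt_ps => [|q] [|s] //; rewrite ?muln0 // => _ lt_ps.
  rewrite mono_exchange_bd; apply: zspan_sum => i _.
  by apply: zspanZ; [apply: kbar_Pex | apply: IH; lia].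
case: p r pr_neq0 lt_ps => [|p] [|r] //; rewrite ?muln0 // => _ lt_ps.
rewrite mono_exchange_ac; apply: zspan_sum => i _.
by apply: zspanZ; [apply: kbar_Pex | apply: IH; lia].
Qed.

Lemma zspanM f g : zspan f -> zspan g -> zspan (f * g).
Proof.
move=> [l1 [kl1 ->]] [l2 [kl2 ->]].
rewrite big_seq mulr_suml; apply: zspan_sum => t t_l1.
rewrite big_seq mulr_sumr; apply: zspan_sum => u u_l2.
rewrite (_ : _ * _ = embK (t.1 * u.1) * (z t.2 * z u.2)); last by rewrite rmorphM; ring.
apply: zspanZ; first by constructor; [apply: kl1 | apply: kl2].
by rewrite !zmonE monoM; apply: zspan_mono.
Qed.

Lemma Awin_zspan f : Awin j f -> zspan f.
Proof.
have zspan1 : zspan 1 by have := zspan_mono 0 0 0 0; rewrite /mono !expr0 !mulr1.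
apply: gen_ring_min => [||g zg||g [[e ke ->] | [n /andP [ge_n le_n] ->]]].
- exact: zspan1.
- exact: zspanD.
- by rewrite -mulN1r -(rmorph1 (@embK k)) -rmorphN; apply: zspanZ => //; do 2!constructor.
- exact: zspanM.
- by rewrite -[embK e]mulr1; apply: zspanZ.
have : n = j - 1 \/ n = j \/ n = j + 1 \/ n = j + 2 by lia.
case=> [|[|[|]]] ->.
- by have := zspan_mono 1 0 0 0; rewrite /mono !expr0 expr1 !mulr1.
- by have := zspan_mono 0 1 0 0; rewrite /mono !expr0 expr1 !mulr1 mul1r.
- by have := zspan_mono 0 0 1 0; rewrite /mono !expr0 expr1 !mulr1 !mul1r.
- by have := zspan_mono 0 0 0 1; rewrite /mono !expr0 expr1 !mul1r.
Qed.

Lemma mono_mul_bc (p q r s N : nat) : (p <= N)%N -> (s <= N)%N ->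
  mono p q r s * (b ^+ N * c ^+ N) =
  evalK (Pex j) b ^+ p * b ^+ (N + q - s) *
  (evalK (Pex (j + 1)) c ^+ s * c ^+ (N + r - p)).
Proof.
move=> le_pN le_sN; rewrite -x_exchange_ac -x_exchange_bd /mono !exprMn.
rewrite -[in b ^+ N](subnK le_sN) -[in c ^+ N](subnK le_pN) !exprD.
rewrite (_ : (N + q - s = q + (N - s))%N); last by lia.
by rewrite (_ : (N + r - p = r + (N - p))%N) ?exprD; [ring | lia].
Qed.

Lemma coef0_Pex_exp n e : ((Pex n) ^+ e)`_0 != 0.
Proof. by rewrite -horner_coef0 horner_exp horner_coef0 Pex_coef0 expr1n oner_neq0. Qed.

Lemma zmon_free (S : seq (int * int)) (cf : int * int -> k) : uniq S ->
  \sum_(al <- S) embK (cf al) * z al = 0 -> {in S, forall al, cf al = 0}.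
Proof.
move=> uS sum0 al0 al0S.
set N := (\sum_(al <- S) (posp al.2 + posp al.1))%N.
have bound al : al \in S -> (posp al.2 + posp al.1 <= N)%N.
  by move=> alS; rewrite /N (big_rem al alS) leq_addr.
pose m (al : int * int) := (N + posp (- al.1) - posp al.1)%N.
pose n (al : int * int) := (N + posp (- al.2) - posp al.2)%N.
apply: (@lowest_terms_free _ S cf (fun al => Pex j ^+ posp al.2)
         (fun al => Pex (j + 1) ^+ posp al.1) m n uS _ _ _ _ al0 al0S).
- move=> [a1 a2] [b1 b2] /bound /= al_le /bound /= be_le [] /=.
  rewrite /m /n /= => eq_m eq_n.
  have := posp_opp_sub a1; have := posp_opp_sub a2.
  have := posp_opp_sub b1; have := posp_opp_sub b2.
  by move=> *; congr (_, _); lia.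
- by move=> al; apply: coef0_Pex_exp.
- by move=> al; apply: coef0_Pex_exp.
apply: (@alg_indep_x j); rewrite eval2_sum.
rewrite (_ : \sum_(al <- S) _ = (\sum_(al <- S) embK (cf al) * z al) * (b ^+ N * c ^+ N)).
  by rewrite sum0 mul0r.
rewrite mulr_suml !big_seq; apply: eq_bigr => al /bound /=; rewrite addnC => le_al.
rewrite !eval2M eval2_map_polyC !eval2_polyC !evalKM !evalKX !evalK_X evalK_C.
by rewrite -[RHS]mulrA zmonE mono_mul_bc; [rewrite /m /n; ring | lia | lia].
Qed.

End StandardMonomials.

Lemma Aclu_x n : Aclu P1 P2 (x n).
Proof. by constructor; right; exists n. Qed.

Lemma Aclu_zmon j al : Aclu P1 P2 (zmon P1 P2 j al).
Proof.
rewrite /zmon; apply: gen_mul; [apply: gen_mul; [apply: gen_mul |] |].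
all: exact/gen_ringX/Aclu_x.
Qed.

Lemma Aclu_zspan j f : Aclu P1 P2 f -> zspan j f.
Proof. by move=> /(Aclu_sub_Awin j); apply: Awin_zspan. Qed.

End Field.

Theorem theorem2p4 (k : fieldType) (chk0 : [pchar k] =i pred0)
  (P1 P2 : {poly k}) (mP1 : P1 \is monic) (mP2 : P2 \is monic)
  (palP1 : palindromic P1) (palP2 : palindromic P2) (j : int) :
  is_basis (@embK k) (kbar P1 P2) (Aclu P1 P2) (zmon P1 P2 j).
Proof.
split.
- exact: Aclu_zmon.
- move=> f /(Aclu_zspan mP1 mP2 palP1 palP2 j) [l [kl ->]].
  have [S [c [_ kc ->]]] := sum_collect (zmon P1 P2 j) (gen_ring0 _) (@gen_add _ _) kl.
  by exists S, c.
- by move=> S c uS _; apply: (zmon_free mP1 mP2 palP1 palP2).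
Qed.
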